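(* Let $T$ be a tree and let $\bar T$ be its complement. Then $L(\bar T)^2$ is a clique (complete graph).
   Context: For a graph $H$, $L(H)^2$ denotes the square of the line graph of $H$: its vertices are the edges of $H$, and two distinct edges $e,f$ of $H$ are adjacent in $L(H)^2$ if they share an endpoint or some edge of $H$ joins an endpoint of $e$ to an endpoint of $f$. *)

From mathcomp Require Import all_boot.
Set Implicit Arguments. Unset Strict Implicit. Unset Printing Implicit Defensive.

Definition simple_graph (V : finType) (g : rel V) : Prop :=
  irreflexive g /\ symmetric g.

Definition connected_graph (V : finType) (g : rel V) : Prop :=
  forall x y : V, connect g x y.

Definition is_cycle (V : finType) (g : rel V) (x : V) (p : seq V) : bool :=
  [&& 2 <= size p, uniq (x :: p), path g x p & g (last x p) x].

Definition acyclic (V : finType) (g : rel V) : Prop :=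
  forall (x : V) (p : seq V), ~~ is_cycle g x p.

Definition is_tree (V : finType) (g : rel V) : Prop :=
  simple_graph g /\ connected_graph g /\ acyclic g.

Definition complement (V : finType) (g : rel V) : rel V :=
  fun x y => (x != y) && ~~ g x y.

Definition edges (V : finType) (g : rel V) : {set {set V}} :=
  [set A : {set V} | [exists u, exists v, g u v && (A == [set u; v])]].

(* Adjacency in L(H)^2 of two edges e f (assumed distinct): they share an
   endpoint or some edge of H joins an endpoint of e to an endpoint of f. *)
Definition sq_line_adj (V : finType) (g : rel V) (e f : {set V}) : bool :=
  [exists x in e, exists y in f, (x == y) || g x y].

Definition sq_line_graph_clique (V : finType) (g : rel V) : Prop :=
  forall e f : {set V}, e \in edges g -> f \in edges g -> e != f ->
    sq_line_adj g e f.

From mathcomp Require Import all_boot.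

Set Implicit Arguments.
Unset Strict Implicit.
Unset Printing Implicit Defensive.

(* If two edges ab and cd of the complement of T were non-adjacent in its
   line-graph square, then a, b, c, d would be distinct and every pair {a or b,
   c or d} would be an edge of T, so a c b d would be a 4-cycle in T. *)

Section SquareLineGraph.

Variables (V : finType) (g : rel V).

Lemma edgesP (e : {set V}) :
  reflect (exists u v, g u v /\ e = [set u; v]) (e \in edges g).
Proof.
rewrite inE; apply: (iffP existsP) => [[u /existsP[v /andP[guv /eqP->]]]|].
  by exists u, v.
by move=> [u [v [guv ->]]]; exists u; apply/existsP; exists v; rewrite guv eqxx.
Qed.

Lemma complement_neq (x y : V) : complement g x y -> x != y.
Proof. by case/andP. Qed.

Lemma not_sq_line_adj_complement (e f : {set V}) :
  ~~ sq_line_adj (complement g) e f -> {in e & f, forall x y, g x y}.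
Proof.
move=> nadj x y xe yf; apply: contraNT nadj => ngxy.
by apply/existsP; exists x; apply/andP; split=> //; apply/existsP; exists y;
  rewrite yf /complement ngxy andbT; case: eqP.
Qed.

Lemma simple_acyclic_no_C4 (a b c d : V) :
  simple_graph g -> acyclic g -> a != b -> c != d ->
  g a c -> g a d -> g b c -> g b d -> False.
Proof.
move=> [irr sym] acyc ab cd gac gad gbc gbd.
have neq x y : g x y -> x != y by apply: contraTneq => ->; rewrite irr.
apply: (negP (acyc a [:: c; b; d])).
rewrite /is_cycle /= !inE !negb_or ab cd (eq_sym c b).
by rewrite !neq // gac (sym c b) gbc gbd (sym d a) gad.
Qed.

End SquareLineGraph.

Theorem lemma2 (V : finType) (t : rel V) :
  is_tree t -> sq_line_graph_clique (complement t).
Proof.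
move=> [simple_t [_ acyclic_t]] e f.
move=> /edgesP[a [b [tab ->]]] /edgesP[c [d [tcd ->]]] _.
apply: contraT => /not_sq_line_adj_complement cross.
have [] := simple_acyclic_no_C4 simple_t acyclic_t
  (complement_neq tab) (complement_neq tcd).
all: by apply: cross; rewrite !inE eqxx ?orbT.
Qed.
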